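(* For any $\varepsilon\in(0,1)$, $\delta>0$ and $\tau>0$ there is a CTMC $\mathcal{M}=(S,P,E,s_{init},L)$ with states $s,s'$ such that $\{s,s'\}$ is a block of a $\tau$-quasi-lumpability $\Omega$ of $\mathcal{M}$, but the pair $(s,s')$ satisfies neither the $\delta$-condition $|\ln E(s)-\ln E(s')|\leq\delta$ nor the $\varepsilon$-condition (for all $A\subseteq S$: $P(s,A)\leq P(s',R(A))+\varepsilon$) with respect to the equivalence relation $R$ induced by $\Omega$.
   Context: A CTMC $(S,P,E,s_{init},L)$: finite $S$, transition probabilities $P\colon S\to\mathrm{Distr}(S)$ with $P(s,A)=\sum_{a\in A}P(s,a)$, exit rates $E\colon S\to\mathbb{R}_{>0}$, initial state, labeling. For $R\subseteq S\times S$ and $A\subseteq S$, $R(A)=\{t\mid\exists a\in A:(a,t)\in R\}$. For $\tau\geq0$, a partition $\Omega=\{\Omega_1,\dots,\Omega_m\}$ of $S$ is a $\tau$-quasi-lumpability if for all $i,j$ and all $s,s'\in\Omega_i$: $|P(s,\Omega_j)E(s)-P(s',\Omega_j)E(s')|\leq\tau$. *)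

From HB Require Import structures.
From mathcomp Require Import all_boot all_order all_algebra.
From mathcomp Require Import reals exp.
Set Implicit Arguments. Unset Strict Implicit. Unset Printing Implicit Defensive.
Import Order.TTheory GRing.Theory Num.Theory.
Local Open Scope ring_scope.

Record CTMC (R : realType) := MkCTMC {
  st : finType;
  AP : Type;
  Pr : st -> st -> R;
  Ex : st -> R;
  s_init : st;
  Lab : st -> AP -> bool;
}.

Definition wf_CTMC (R : realType) (M : CTMC R) : Prop :=
  (forall s t : st M, 0 <= Pr s t) /\
  (forall s : st M, \sum_(t : st M) Pr s t = 1) /\
  (forall s : st M, 0 < Ex s).

Definition PrSet (R : realType) (M : CTMC R) (s : st M) (A : {set st M}) : R :=
  \sum_(a in A) Pr s a.

Definition quasi_lumpability (R : realType) (M : CTMC R) (tau : R)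
    (Om : {set {set st M}}) : Prop :=
  partition Om [set: st M] /\
  forall Bi Bj, Bi \in Om -> Bj \in Om ->
  forall s s', s \in Bi -> s' \in Bi ->
    `| PrSet s Bj * Ex s - PrSet s' Bj * Ex s' | <= tau.

Definition induced_rel (T : finType) (Om : {set {set T}}) (s t : T) : bool :=
  [exists B in Om, (s \in B) && (t \in B)].

Definition rel_image (T : finType) (Rl : T -> T -> bool) (A : {set T}) : {set T} :=
  [set t | [exists a in A, Rl a t]].

Definition delta_condition (R : realType) (M : CTMC R) (delta : R) (s s' : st M) : Prop :=
  `| ln (Ex s) - ln (Ex s') | <= delta.

Definition eps_condition (R : realType) (M : CTMC R) (eps : R)
    (Rl : st M -> st M -> bool) (s s' : st M) : Prop :=
  forall A : {set st M}, PrSet s A <= PrSet s' (rel_image Rl A) + eps.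

(** Take the deterministic chain in which [s] jumps to an absorbing state [w],
    [s'] jumps to [s], and [E s = tau * e^-(delta + 1)], [E s' = tau].
    Quasi-lumpability only compares the products [P(t, B) * E t], which lie in
    [[0, E t]] and hence in [[0, tau]] for [t = s, s'], so [{s, s'}] together
    with [{w}] is a tau-quasi-lumpability.  Yet the log-rates of [s] and [s']
    differ by [delta + 1], and the class [{w}] of [w] is reached from [s] with
    probability 1 but from [s'] with probability 0. *)

From HB Require Import structures.
From mathcomp Require Import all_boot all_order all_algebra.
From mathcomp Require Import reals sequences exp.
From mathcomp Require Import lra.
Set Implicit Arguments. Unset Strict Implicit. Unset Printing Implicit Defensive.
Import Order.TTheory GRing.Theory Num.Theory.
Local Open Scope ring_scope.

Lemma sum_indicator (R : pzSemiRingType) (T : finType) (P : pred T) (x : T) :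
  \sum_(t | P t) ((t == x)%:R : R) = (P x)%:R.
Proof.
case Px: (P x).
  rewrite (bigD1 x) //= eqxx big1 ?addr0 // => t /andP[_ /negbTE ->].
  exact: mulr0n.
rewrite big1 // => t Pt; suff /negbTE -> : t != x by [].
by apply: contraTneq Pt => ->; rewrite Px.
Qed.

Section PreimPartition.
Variables (T : finType) (rT : eqType) (f : T -> rT) (D : {set T}).

Lemma preim_partition_eq (B : {set T}) s t :
  B \in preim_partition f D -> s \in B -> t \in B -> f s = f t.
Proof.
by case/imsetP=> x _ ->; rewrite !inE => /andP[_ /eqP <-] /andP[_ /eqP <-].
Qed.

Lemma preim_partition_mem (B : {set T}) x :
  x \in D -> (forall y, (y \in B) = (y \in D) && (f x == f y)) ->
  B \in preim_partition f D.
Proof.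
move=> Dx defB; apply/imsetP; exists x => //.
by apply/setP=> y; rewrite defB inE.
Qed.

Lemma induced_rel_preim_partition s t :
  induced_rel (preim_partition f D) s t -> f s = f t.
Proof. by case/existsP=> B /and3P[PB Bs Bt]; exact: preim_partition_eq PB Bs Bt. Qed.

Lemma rel_image_preim_partition A t :
  t \in rel_image (induced_rel (preim_partition f D)) A ->
  exists2 a, a \in A & f a = f t.
Proof.
rewrite inE => /existsP[a /andP[Aa /induced_rel_preim_partition fat]].
by exists a.
Qed.

End PreimPartition.

Section QuasiLumpability.
Variables (R : realType) (M : CTMC R).
Hypothesis wfM : wf_CTMC M.

Lemma PrSet_ge0 (s : st M) A : 0 <= PrSet s A.
Proof. by apply: sumr_ge0 => t _; case: wfM. Qed.

Lemma PrSet_le1 (s : st M) A : PrSet s A <= 1.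
Proof.
case: wfM => Pr_ge0 [Pr_sum _]; rewrite -(Pr_sum s) /PrSet.
rewrite [leRHS](bigID (mem A)) /= lerDl.
by apply: sumr_ge0 => t _; apply: Pr_ge0.
Qed.

Lemma PrSet_Ex_bound (s : st M) A : 0 <= PrSet s A * Ex s <= Ex s.
Proof.
have Ex_gt0 : 0 < Ex s by case: wfM => _ [_]; apply.
apply/andP; split; first by rewrite mulr_ge0 ?PrSet_ge0 ?ltW.
by rewrite ler_piMl ?PrSet_le1 ?ltW.
Qed.

Lemma quasi_lumpability_slow_blocks (tau : R) (Om : {set {set st M}}) :
  0 <= tau -> partition Om [set: st M] ->
  (forall B s s', B \in Om -> s \in B -> s' \in B -> s != s' -> Ex s <= tau) ->
  quasi_lumpability tau Om.
Proof.
move=> tau_ge0 partOm slowOm; split=> // Bi Bj Om_i Om_j s s' Bs Bs'.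
have [<-|neq_ss'] := eqVneq s s'; first by rewrite subrr normr0.
have Es := slowOm _ _ _ Om_i Bs Bs' neq_ss'.
have Es' := slowOm _ _ _ Om_i Bs' Bs; rewrite eq_sym neq_ss' in Es'.
have /andP[u0 u1] := PrSet_Ex_bound s Bj.
have /andP[v0 v1] := PrSet_Ex_bound s' Bj.
rewrite ler_norml; apply/andP; split; move/(_ isT): Es'; lra.
Qed.

End QuasiLumpability.

Section DeterministicChain.
Variables (R : realType) (T : finType) (next : T -> T) (E : T -> R) (init : T).

Definition det_CTMC : CTMC R :=
  @MkCTMC R T unit (fun s t => (t == next s)%:R) E init (fun _ _ => true).

Lemma PrSet_det (s : T) (A : {set T}) :
  PrSet (M := det_CTMC) s A = (next s \in A)%:R.
Proof. exact: sum_indicator. Qed.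

Lemma wf_det_CTMC : (forall s, 0 < E s) -> wf_CTMC det_CTMC.
Proof. by move=> E_gt0; split=> [s t|]; [|split=> // s; rewrite sum_indicator]. Qed.

End DeterministicChain.

Section Counterexample.
Variables (R : realType) (delta tau : R).

Definition s_low : 'I_3 := @Ordinal 3 0 isT.
Definition s_tau : 'I_3 := @Ordinal 3 1 isT.
Definition s_sink : 'I_3 := @Ordinal 3 2 isT.

Definition next3 (i : 'I_3) : 'I_3 := if i == s_tau then s_low else s_sink.

Definition rate3 (i : 'I_3) : R :=
  if i == s_low then tau * expR (- (delta + 1))
  else if i == s_tau then tau else 1.

Definition chain3 : CTMC R := det_CTMC next3 rate3 s_low.

Definition Om3 : {set {set 'I_3}} := preim_partition (pred1 s_sink) [set: 'I_3].

End Counterexample.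

Theorem proposition2 (R : realType) (eps delta tau : R) :
  0 < eps -> eps < 1 -> 0 < delta -> 0 < tau ->
  exists (M : CTMC R) (s s' : st M) (Om : {set {set st M}}),
    wf_CTMC M /\
    quasi_lumpability tau Om /\
    [set s; s'] \in Om /\
    ~ delta_condition delta s s' /\
    ~ eps_condition eps (induced_rel Om) s s'.
Proof.
move=> eps_gt0 eps_lt1 delta_gt0 tau_gt0.
have exp_gt0 : 0 < expR (- (delta + 1)) :> R by exact: expR_gt0.
have wf3 : wf_CTMC (chain3 delta tau).
  apply: wf_det_CTMC => i.
  by rewrite /rate3; do 2?case: ifP => _; rewrite ?mulr_gt0.
exists (chain3 delta tau), s_low, s_tau, Om3; split=> //; split.
  apply: quasi_lumpability_slow_blocks => //; first exact: ltW.
    exact: preim_partitionP.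
  move=> B s s' Om_B Bs Bs' neq_ss'.
  have := preim_partition_eq Om_B Bs Bs'.
  case: s neq_ss' {Bs} => [[|[|[|//]]] ?]; case: s' {Bs'} => [[|[|[|//]]] ?] //= _ _.
  by rewrite /rate3 /= ler_piMr ?expR_le1; lra.
split.
  apply: (@preim_partition_mem _ _ _ _ _ s_low) => // y.
  by rewrite !inE; case: y => [[|[|[|//]]] ?].
split.
  rewrite /delta_condition /= /rate3 /= lnM ?posrE // expRK.
  by rewrite addrAC subrr add0r normrN gtr0_norm; lra.
move=> /(_ [set s_sink]); rewrite !PrSet_det /= /next3 /= in_set1 eqxx /=.
suff -> : (s_low \in rel_image (induced_rel Om3) [set s_sink]) = false.
  by rewrite add0r; lra.
apply/negbTE/negP => /rel_image_preim_partition[a].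
by rewrite in_set1 => /eqP -> /=.
Qed.
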